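(* Let $a\ge1$ be an integer, let $t_{d-a},\ldots,t_d\in\mathbb{C}^*$, and let $P(Y)=\sum_{l=0}^d p_lY^l\in R[Y]$ be an $m$-triangular polynomial of degree $d$ for some integer $m\ge 1$. Then the map $\mathbb{C}^a\times\mathbb{C}^*\to\mathbb{C}^a\times\mathbb{C}^*$, $x\mapsto (t_{d-a}p_{d-a}(x),\ldots,t_dp_d(x))$, is surjective.
   Context: Fix a positive integer $a$ and variables $u_0,\ldots,u_a$. Let $R=\mathbb{C}[u_0,\ldots,u_{a-1}][u_a,u_a^{-1}]$ and $U(Y)=\sum_{j=0}^a u_jY^j\in R[Y]$. For $r\in R$ and $x=(x_0,\ldots,x_a)\in\mathbb{C}^a\times\mathbb{C}^*$, $r(x)\in\mathbb{C}$ denotes the evaluation of $r$ at $u_i=x_i$. $\mathbb{Q}_+$ denotes the positive rational numbers. For an integer $m\ge1$, a polynomial $P(Y)=\sum_{l=0}^dp_lY^l\in R[Y]$ of degree $d\ge a$ is called $m$-triangular (or $(m,U)$-triangular) if for every $l$ with $d-a\le l\le d$ one has $p_l=q_lu_a^{m-1}u_{a-d+l}+P_l(u_{a-d+l+1},\ldots,u_a)$ for some $q_l\in\mathbb{Q}_+$ and some polynomial $P_l\in\mathbb{C}[u_{a-d+l+1},\ldots,u_a]$ (for $l=d$ this means $p_d=q_du_a^m$). *)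

From HB Require Import structures.
From mathcomp Require Import all_boot all_order all_algebra.
From mathcomp Require Import reals.
From mathcomp Require Import complex.
From mathcomp Require Import mpoly.

Set Implicit Arguments.
Unset Strict Implicit.
Unset Printing Implicit Defensive.

Import Order.TTheory GRing.Theory Num.Theory.
Local Open Scope ring_scope.

(* Variables u_0, ..., u_a are indexed by 'I_(a.+1); u_a is [ord_max]. *)

(* An element of R = C[u_0,...,u_{a-1}][u_a, u_a^{-1}] is represented by a
   pair (k, q) with k : nat and q a polynomial in C[u_0,...,u_a], standing
   for the Laurent polynomial q / u_a^k. *)
Definition laurent (C : nzRingType) (a : nat) := (nat * {mpoly C[a.+1]})%type.

Definition uvar (C : nzRingType) (a j : nat) : {mpoly C[a.+1]} := 'X_(inord j).

(* r = q in R, for a genuine polynomial q : the representative (k, q') of r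
   satisfies q' = u_a^k * q. *)
Definition laurent_eqpoly (C : nzRingType) (a : nat) (r : laurent C a)
  (q : {mpoly C[a.+1]}) : Prop :=
  r.2 = (uvar C a a) ^+ r.1 * q.

Definition laurent_neq0 (C : nzRingType) (a : nat) (r : laurent C a) : bool :=
  r.2 != 0.

Definition laurent_eval (C : fieldType) (a : nat) (r : laurent C a)
  (x : 'I_(a.+1) -> C) : C :=
  r.2.@[x] / (x ord_max) ^+ r.1.

Definition only_vars_above (C : nzRingType) (a k : nat) (q : {mpoly C[a.+1]}) :
  Prop :=
  forall mo : 'X_{1..a.+1}, mo \in msupp q ->
    forall j : 'I_(a.+1), (j <= k)%N -> mo j = 0%N.

(* A polynomial P(Y) = \sum_{l=0}^d p_l Y^l in R[Y], given by its coefficient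
   family p : 'I_(d.+1) -> R, is (m,U)-triangular: d >= a and for every
   d-a <= l <= d, p_l = q_l u_a^(m-1) u_(a-d+l) (index l-(d-a) in nat) + P_l(u_(a-d+l+1),...,u_a)
   with q_l a positive rational and P_l a polynomial (P_d = 0). *)
Definition triangular (C : fieldType) (a d m : nat)
  (p : 'I_(d.+1) -> laurent C a) : Prop :=
  (a <= d)%N /\
  forall l : 'I_(d.+1), (d - a <= l)%N ->
    exists q : rat, 0 < q /\
    exists Pl : {mpoly C[a.+1]},
      only_vars_above (l - (d - a)) Pl /\
      (l = ord_max -> Pl = 0) /\
      laurent_eqpoly (p l)
        (ratr q *: ((uvar C a a) ^+ m.-1 * uvar C a (l - (d - a))) + Pl).

Arguments triangular {C} a d m p.

From HB Require Import structures.
From mathcomp Require Import all_boot all_order all_algebra.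
From mathcomp Require Import reals complex mpoly.

(* By triangularity the i-th coordinate of the map is
   c_i x_a^(m-1) x_i + P_i(x_(i+1), ..., x_a) with c_i <> 0, and P_a = 0.
   Hence the system x |-> y is solved by back substitution: x_a is an m-th root
   of y_a / c_a (nonzero since y_a is), and once x_(i+1), ..., x_a are fixed the
   i-th equation is linear in x_i with the nonzero coefficient c_i x_a^(m-1). *)

Import Order.TTheory GRing.Theory Num.Theory.
Local Open Scope ring_scope.

Definition depends_above {T : Type} {n : nat} (k : nat) (g : ('I_n -> T) -> T) :=
  forall x x' : 'I_n -> T,
    (forall j : 'I_n, (k < j)%N -> x j = x' j) -> g x = g x'.

Lemma meval_only_vars_above {C : fieldType} {a k : nat} {P : {mpoly C[a.+1]}} :
  only_vars_above k P -> depends_above k (fun x => P.@[x]).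
Proof.
move=> hP x x' hx; rewrite !mevalE; apply: eq_big_seq => mo hmo.
congr (_ * _); apply: eq_bigr => j _.
by case: (leqP j k) => hj; [rewrite (hP mo hmo j hj) !expr0 | rewrite hx].
Qed.

Lemma exists_root_neq0 {F : numClosedFieldType} {m : nat} {z : F} :
  (0 < m)%N -> z != 0 -> exists2 r : F, r != 0 & r ^+ m = z.
Proof.
move=> m_gt0 z0; exists (m.-root z); last exact: rootCK.
by apply: contraNneq z0 => r0; rewrite -(rootCK m_gt0 z) r0 expr0n gtn_eqF.
Qed.

Section BackSubstitution.

Variables (F : numClosedFieldType) (a m : nat).
Variables (c : 'I_a.+1 -> F) (g : 'I_a.+1 -> ('I_a.+1 -> F) -> F).
Variable y : 'I_a.+1 -> F.

Hypothesis m_gt0 : (0 < m)%N.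
Hypothesis c_neq0 : forall i, c i != 0.
Hypothesis g_above : forall i : 'I_a.+1, depends_above i (g i).
Hypothesis g_last : forall x, g ord_max x = 0.
Hypothesis y_last : y ord_max != 0.

Definition solves (x : 'I_a.+1 -> F) (i : 'I_a.+1) :=
  c i * x ord_max ^+ m.-1 * x i + g i x = y i.

Lemma solves_agree (x x' : 'I_a.+1 -> F) (i : 'I_a.+1) :
  (forall j : 'I_a.+1, (i <= j)%N -> x j = x' j) ->
  solves x i -> solves x' i.
Proof.
move=> hxx'; have i_max : (i <= ord_max)%N := leq_ord i.
rewrite /solves -(hxx' i) // -(hxx' ord_max) //.
by rewrite -(g_above i x x') // => j /ltnW; apply: hxx'.
Qed.

Lemma solves_last : exists x, x ord_max != 0 /\ solves x ord_max.
Proof.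
have [r r0 hr] :=
  exists_root_neq0 m_gt0 (mulf_neq0 y_last (invr_neq0 (c_neq0 ord_max))).
exists (fun=> r); split=> //.
by rewrite /solves g_last addr0 -mulrA -exprSr prednK // hr mulrC divfK.
Qed.

Lemma solves_update {x : 'I_a.+1 -> F} {k : 'I_a.+1} :
  k != ord_max -> x ord_max != 0 ->
  exists v, solves (fun j => if j == k then v else x j) k.
Proof.
move=> k_max x0; set e := c k * x ord_max ^+ m.-1.
have e0 : e != 0 by rewrite mulf_neq0 ?expf_neq0.
exists ((y k - g k x) / e); rewrite /solves; set x' := fun j => _.
have -> : g k x' = g k x.
  by apply: g_above => j; rewrite /x'; case: eqP => // ->; rewrite ltnn.
by rewrite /x' eqxx eq_sym (negbTE k_max) -/e mulrC divfK // subrK.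
Qed.

Lemma solves_from (n : nat) : (n <= a)%N ->
  exists x, x ord_max != 0 /\
    forall i : 'I_a.+1, (a - n <= i)%N -> solves x i.
Proof.
elim: n => [_ | n IH n_lt].
  have [x [x0 hx]] := solves_last; exists x; split=> // i.
  by rewrite subn0 => hi; rewrite (_ : i = ord_max) //; apply/val_inj/eqP;
    rewrite eqn_leq hi -ltnS ltn_ord.
have [x [x0 hx]] := IH (ltnW n_lt).
pose k : 'I_a.+1 := inord (a - n.+1).
have val_k : val k = (a - n.+1)%N by rewrite /k /= inordK // ltnS leq_subr.
have k_max : k != ord_max.
  by rewrite -val_eqE val_k /= neq_ltn ltn_subrL (leq_ltn_trans _ n_lt).
have [v hv] := solves_update k_max x0.
exists (fun j => if j == k then v else x j); split; first by rewrite ifN_eqC.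
move=> i; rewrite -val_k leq_eqVlt => /orP[/eqP/val_inj <- // | ki].
apply: solves_agree (hx i _) => [j ij|]; last by rewrite -subnSK // -val_k.
by case: eqP => // jk; move: ki; rewrite -jk ltnNge ij.
Qed.

Lemma triangular_system_solvable :
  exists x, x ord_max != 0 /\ forall i, solves x i.
Proof.
have [x [x0 hx]] := solves_from _ (leqnn a).
by exists x; split=> // i; apply: hx; rewrite subnn.
Qed.

End BackSubstitution.

Lemma triangular_eval {R : realType} {a d m : nat}
  {p : 'I_(d.+1) -> laurent R[i] a} :
  triangular a d m p -> forall i : 'I_(a.+1),
  exists cP : R[i] * {mpoly R[i][a.+1]},
    [/\ cP.1 != 0, only_vars_above i cP.2, (i = ord_max -> cP.2 = 0) &
    forall x, x ord_max != 0 ->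
      laurent_eval (p (inord (d - a + i))) x =
        cP.1 * x ord_max ^+ m.-1 * x i + cP.2.@[x]].
Proof.
move=> [had htr] i.
have val_l : val (inord (d - a + i) : 'I_(d.+1)) = (d - a + i)%N.
  by rewrite /= inordK // ltnS -{2}(subnK had) leq_add2l -ltnS.
have := htr (inord (d - a + i)); rewrite val_l leq_addr addKn.
move=> /(_ isT) [q [q0 [Pl [hov [hmax heq]]]]].
exists (ratr q, Pl); split=> //=; first by rewrite lt0r_neq0 // ltr0q.
  by move=> ei; apply: hmax; apply: val_inj; rewrite val_l ei /= subnK.
move=> x x0; rewrite /laurent_eval heq.
have -> : uvar R[i] a a = 'X_ord_max.
  by rewrite /uvar; congr 'X_ _; apply: val_inj; rewrite /= inordK.
rewrite /uvar inord_val mevalM rmorphXn /= mevalD mevalZ mevalM rmorphXn /=.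
by rewrite !mevalXU mulrC mulrA mulVf ?mul1r ?expf_neq0 // mulrA.
Qed.

Theorem mainTheorem2 (R : realType) (a d m : nat)
  (p : 'I_(d.+1) -> laurent R[i] a) (t : 'I_(a.+1) -> R[i]) :
  (0 < a)%N -> (0 < m)%N ->
  (forall i, t i != 0) ->
  laurent_neq0 (p ord_max) ->
  triangular a d m p ->
  forall y : 'I_(a.+1) -> R[i], y ord_max != 0 ->
    exists x : 'I_(a.+1) -> R[i], x ord_max != 0 /\
      forall i : 'I_(a.+1),
        t i * laurent_eval (p (inord (d - a + i))) x = y i.
Proof.
move=> _ m_gt0 t0 _ htr y y0.
have [cP hcP] := fin_all_exists (triangular_eval htr).
have [||| x [x0 hx]] := @triangular_system_solvable _ a m
  (fun i => t i * (cP i).1) (fun i x => t i * (cP i).2.@[x]) y m_gt0 _ _ _ y0.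
- by move=> i; have [c0 _ _ _] := hcP i; rewrite mulf_neq0.
- move=> i z z' hz; have [_ hov _ _] := hcP i.
  by rewrite (meval_only_vars_above hov z z' hz).
- by move=> z; have [_ _ P0 _] := hcP ord_max; rewrite P0 // meval0 mulr0.
exists x; split=> // i; have [_ _ _ ->] := hcP i => //.
by rewrite -(hx i) mulrDr !mulrA.
Qed.
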